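(* Let $(X,d,\mu)$ be as in the context, let $\theta>0$ and let $S\in\mathcal{ADR}_\theta(X)$ with constants $\varkappa_1,\varkappa_2$. Then: (1) $\mu(S)=0$; (2) there is $\sigma\in(0,1]$, depending on $\theta$, $\varkappa_1$, $\varkappa_2$ (and the doubling constant of $\mu$), such that $S$ is $\sigma$-porous.
   Context: Standing setting: $(X,d)$ complete separable metric space, $\mu$ a Borel regular locally finite outer measure, $\operatorname{supp}\mu=X$, uniformly locally doubling (for every $R>0$, $\sup_{r\in(0,R]}\sup_x\mu(B_{2r}(x))/\mu(B_r(x))<\infty$). Balls are closed, $B_r(x)=\{y:d(x,y)\le r\}$. A fixed $p\in(1,\infty)$; $X$ supports a weak local $(1,p)$-Poincaré inequality (for every $R>0$ there are $C,\lambda\ge1$ with $\inf_c\frac{1}{\mu(B_r(x))}\int_{B_r(x)}|f-c|d\mu\le Cr(\frac{1}{\mu(B_{\lambda r}(x))}\int_{B_{\lambda r}(x)}(\operatorname{lip}f)^pd\mu)^{1/p}$ for Lipschitz $f$, $x\in X$, $r\in(0,R]$). $\mathcal H_{\theta,\delta}(E):=\inf\{\sum\mu(B_{r_i}(x_i))r_i^{-\theta}:E\subset\bigcup B_{r_i}(x_i),0<r_i<\delta\}$ (countable covers), $\mathcal H_\theta=\lim_{\delta\to0}\mathcal H_{\theta,\delta}$. $S\in\mathcal{ADR}_\theta(X)$: $S$ closed and $\varkappa_1\mu(B_r(x))r^{-\theta}\le\mathcal H_\theta(B_r(x)\cap S)\le\varkappa_2\mu(B_r(x))r^{-\theta}$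 for all $x\in S$, $r\in(0,1]$. Porosity: a ball $B$ is $(S,\sigma)$-porous if there is a ball $B'\subset B\setminus S$ with $r(B')\ge\sigma r(B)$; $S$ is $\sigma$-porous if $B_r(x)$ is $(S,\sigma)$-porous for all $x\in S$ and all $r\in(0,1]$. *)

From HB Require Import structures.
From mathcomp Require Import all_boot all_order all_algebra.
From mathcomp Require Import all_classical all_reals all_analysis.
Set Implicit Arguments. Unset Strict Implicit. Unset Printing Implicit Defensive.
Import Order.TTheory GRing.Theory Num.Theory.
Local Open Scope classical_set_scope.
Local Open Scope ring_scope.

Section MetricMeasure.
Context {R : realType} {X : pointedType}.
Variable d : X -> X -> R.

Definition is_metric : Prop :=
  (forall x y, d x y = 0 <-> x = y) /\
  (forall x y, d x y = d y x) /\
  (forall x y z, d x z <= d x y + d y z).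

Definition cball (x : X) (r : R) : set X := [set y | d x y <= r].
Definition oball (x : X) (r : R) : set X := [set y | d x y < r].

Definition mopen (U : set X) : Prop :=
  forall x, U x -> exists r, 0 < r /\ oball x r `<=` U.
Definition mclosed (F : set X) : Prop := mopen (~` F).

Definition mcomplete : Prop :=
  forall u : nat -> X,
    (forall e, 0 < e -> exists N, forall m n, (N <= m)%N -> (N <= n)%N ->
        d (u m) (u n) < e) ->
    exists l, forall e, 0 < e -> exists N, forall n, (N <= n)%N -> d (u n) l < e.

Definition mseparable : Prop :=
  exists D : set X, countable D /\
    forall x e, 0 < e -> exists y, D y /\ d x y < e.

Definition borel_sets : set (set X) := <<s [set U | mopen U] >>.

Local Open Scope ereal_scope.
Variable mu : {outer_measure set X -> \bar R}.

Definition borel_regular : Prop :=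
  (forall B, borel_sets B -> mu.-caratheodory B) /\
  (forall A, exists B, borel_sets B /\ A `<=` B /\ mu B = mu A).

Definition locally_finite : Prop :=
  forall x, exists r, (0 < r)%R /\ mu (cball x r) < +oo.

Definition msupport : set X :=
  [set x | forall r, (0 < r)%R -> 0 < mu (oball x r)].

Definition doubling_bounded (Cd : R -> R) : Prop :=
  forall R0, (0 < R0)%R -> forall r x, (0 < r <= R0)%R ->
    mu (cball x (2 * r)) <= (Cd R0)%:E * mu (cball x r).

Definition uniformly_locally_doubling : Prop := exists Cd, doubling_bounded Cd.

(** integration against the restriction of mu to Caratheodory-measurable sets *)
Definition mint (A : set X) (g : X -> \bar R) : \bar R :=
  \int[(mu : set (caratheodory_type mu) -> \bar R)]_(y in A) g y.

Definition mavg (A : set X) (g : X -> \bar R) : \bar R := (mu A)^-1 * mint A g.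

Definition lipschitz (f : X -> R) : Prop :=
  exists L : R, forall x y, (`|f x - f y| <= L * d x y)%R.

Definition Lipr (f : X -> R) (x : X) (r : R) : \bar R :=
  ereal_sup [set (`|f y - f x|)%:E | y in cball x r] * (r^-1)%:E.

Definition lip (f : X -> R) (x : X) : \bar R :=
  ereal_sup [set ereal_inf [set Lipr f x r | r in [set r | (0 < r < delta)%R]]
            | delta in [set delta | (0 < delta)%R]].

Definition poincare (p : R) : Prop :=
  forall R0, (0 < R0)%R -> exists C lam : R, (1 <= C)%R /\ (1 <= lam)%R /\
    forall f, lipschitz f -> forall x r, (0 < r <= R0)%R ->
      ereal_inf [set mavg (cball x r) (fun y => (`|f y - c|)%:E) | c in [set: R]]
      <= (C * r)%:E *
         poweR (mavg (cball x (lam * r)) (fun y => poweR (lip f y) p)) (p^-1).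

Definition Hcontent (theta delta : R) (E : set X) : \bar R :=
  ereal_inf [set s | exists (I : set nat) (c : nat -> X) (rd : nat -> R),
    E `<=` \bigcup_(i in I) cball (c i) (rd i) /\
    (forall i, I i -> (0 < rd i < delta)%R) /\
    s = \esum_(i in I) (mu (cball (c i) (rd i)) * ((rd i) `^ (- theta))%:E)].

Definition Hcodim (theta : R) (E : set X) : \bar R :=
  ereal_sup [set Hcontent theta delta E | delta in [set delta | (0 < delta)%R]].

Definition ADR (theta k1 k2 : R) (S : set X) : Prop :=
  mclosed S /\
  forall x r, S x -> (0 < r <= 1)%R ->
    k1%:E * mu (cball x r) * (r `^ (- theta))%:E <= Hcodim theta (cball x r `&` S) /\
    Hcodim theta (cball x r `&` S) <= k2%:E * mu (cball x r) * (r `^ (- theta))%:E.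

End MetricMeasure.

Section Porosity.
Context {R : realType} {X : pointedType}.
Variable d : X -> X -> R.

Definition porous_ball (S : set X) (sigma : R) (x : X) (r : R) : Prop :=
  exists (y : X) (rho : R), sigma * r <= rho /\
    cball d y rho `<=` cball d x r `\` S.

Definition porous (S : set X) (sigma : R) : Prop :=
  forall x r, S x -> 0 < r <= 1 -> porous_ball S sigma x r.
End Porosity.

From HB Require Import structures.
From mathcomp Require Import all_boot all_order all_algebra.
From mathcomp Require Import all_classical all_reals all_analysis.
From mathcomp Require Import ring lra.
Import Order.TTheory GRing.Theory Num.Theory.
Local Open Scope classical_set_scope.
Local Open Scope ring_scope.

(* (1) By the ADR upper bound, S is locally of finite codimension-theta
   Hausdorff measure; since H_{theta,delta}(E) >= delta^-theta mu(E) with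
   delta^-theta -> +oo, such pieces are mu-null, and separability covers S by
   countably many of them.
   (2) If B_r(x), x in S, contains no S-free ball of radius t = 2^-m r, every
   point of B_{r/2}(x) is t-close to S, so a maximal 4t-separated family y_i in
   S /\ B_{r/2+t}(x) yields B_{r/2}(x) <= U_i B_{8t}(y_i), and doubling gives
   mu(B_r(x)) <= K^4 sum_i mu(B_t(y_i)).  The pieces B_t(y_i) /\ S are 2t apart,
   so H_theta adds up over them, and the two ADR bounds give
   k1 t^-theta sum_i mu(B_t(y_i)) <= k2 r^-theta mu(B_r(x)).  Hence
   k1 2^(m theta) <= k2 K^4, which fails for m large. *)

Lemma exists_maximal_pairwise (T : eqType) (A : set T) (r : rel T) (N : nat) :
    (forall s, {in s, forall y, A y} -> pairwise r s -> (size s <= N)%N) ->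
  exists s, [/\ {in s, forall y, A y}, pairwise r s &
    forall a, A a -> exists2 y, y \in s & ~~ r a y].
Proof.
move=> bounded; apply: contrapT => no_maximal.
have grow n : exists s, [/\ {in s, forall y, A y}, pairwise r s & size s = n].
  elim: n => [|n [s [sA rs sn]]]; first by exists [::].
  have [a Aa ras] : exists2 a, A a & all (r a) s.
    apply: contrapT => no_ext; apply: no_maximal; exists s; split => // a Aa.
    apply: contrapT => far; apply: no_ext; exists a => //; apply/allP => y ys.
    by apply: contrapT => /negP nr; apply: far; exists y.
  exists (a :: s); split => /=; [|by rewrite ras|by rewrite sn].
  by move=> y; rewrite inE => /predU1P[->|/sA].
have [s [sA rs sN]] := grow N.+1.
by have := bounded s sA rs; rewrite sN ltnn.
Qed.

Definition doubling_const {R : realType} (Cd : R -> R) : R := Num.max (Cd 1) 1.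

Lemma doubling_const_gt0 {R : realType} (Cd : R -> R) : 0 < doubling_const Cd.
Proof. by rewrite lt_max ltr01 orbT. Qed.

Lemma doubling_const_ge0 {R : realType} (Cd : R -> R) : 0 <= doubling_const Cd.
Proof. exact: ltW (doubling_const_gt0 Cd). Qed.

Lemma outer_measure_big_setU {R : realType} {T : Type} {I : Type}
    (mu : {outer_measure set T -> \bar R}) (s : seq I) (F : I -> set T) :
  (mu (\big[setU/set0]_(i <- s) F i) <= \sum_(i <- s) mu (F i))%E.
Proof.
elim: s => [|i s IH]; first by rewrite !big_nil outer_measure0.
by rewrite !big_cons; apply: le_trans (outer_measureU2 _ _ _) (leeD2l _ IH).
Qed.

Section MetricMeasure.
Context {R : realType} {X : pointedType} (d : X -> X -> R)
  (mu : {outer_measure set X -> \bar R}).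

Section Metric.
Hypothesis d_metric : is_metric d.

Lemma metric_sym x y : d x y = d y x.
Proof. by case: d_metric => _ []. Qed.

Lemma metric_triangle x y z : d x z <= d x y + d y z.
Proof. by case: d_metric => _ []. Qed.

Lemma subset_cball x y r r' : d x y + r <= r' -> cball d y r `<=` cball d x r'.
Proof.
move=> le_r z /= dyz; apply: le_trans (metric_triangle x y z) _.
by apply: le_trans le_r; rewrite lerD2l.
Qed.

End Metric.

Lemma le_cball x r r' : r <= r' -> cball d x r `<=` cball d x r'.
Proof. by move=> le_r z /= /le_trans; apply. Qed.

Section Doubling.
Context {Cd : R -> R}.
Hypothesis mu_doubling : doubling_bounded d mu Cd.
Local Notation K := (doubling_const Cd).

Lemma mu_cball_double x r : 0 < r <= 1 ->
  (mu (cball d x (2 * r)) <= K%:E * mu (cball d x r))%E.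
Proof.
move=> r01; apply: le_trans (mu_doubling 1 ltr01 r x r01) _.
by rewrite lee_wpmul2r ?outer_measure_ge0 // lee_fin le_max lexx.
Qed.

Lemma mu_cball_expn x r n : 0 < r -> r * 2 ^+ n <= 2 ->
  (mu (cball d x (r * 2 ^+ n)) <= (K ^+ n)%:E * mu (cball d x r))%E.
Proof.
move=> r0; elim: n => [|n IH]; first by rewrite !expr0 mulr1 mul1e.
have r2n0 : 0 < r * 2 ^+ n by rewrite mulr_gt0 ?exprn_gt0.
rewrite [2 ^+ _]exprS mulrCA => r2n.
have r2n1 : 0 < r * 2 ^+ n <= 1 by rewrite r2n0 /=; lra.
apply: le_trans (mu_cball_double x _ r2n1) _.
rewrite exprS EFinM -muleA lee_wpmul2l ?IH //; last by lra.
by rewrite lee_fin doubling_const_ge0.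
Qed.

Lemma mu_cball_le_expn x y r t n : is_metric d -> 0 < t ->
    d y x + r <= t * 2 ^+ n -> t * 2 ^+ n <= 2 ->
  (mu (cball d x r) <= (K ^+ n)%:E * mu (cball d y t))%E.
Proof.
move=> d_metric t0 le_r le_2; apply: le_trans (mu_cball_expn y _ _ t0 le_2).
exact/le_outer_measure/(subset_cball d_metric).
Qed.

Lemma mu_cball_le_cover x r t L : 0 < r <= 1 -> 0 < t -> 8 * t <= 2 ->
    cball d x (r / 2) `<=` \big[setU/set0]_(y <- L) cball d y (8 * t) ->
  (mu (cball d x r) <= (K ^+ 4)%:E * \sum_(y <- L) mu (cball d y t))%E.
Proof.
move=> /andP[r0 r1] t0 t8 cover; have r20 : 0 < r / 2 by rewrite divr_gt0.
have half : (mu (cball d x r) <= K%:E * mu (cball d x (r / 2)))%E.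
  by have := mu_cball_expn x _ 1 r20; rewrite !expr1 divfK ?pnatr_eq0 //; apply; lra.
apply: le_trans half _.
rewrite exprS EFinM -muleA lee_wpmul2l ?lee_fin ?doubling_const_ge0 //.
apply: le_trans (le_outer_measure _ _ _ cover) _.
apply: le_trans (outer_measure_big_setU _ _ _) _.
rewrite ge0_sume_distrr ?lee_fin ?exprn_ge0 ?doubling_const_ge0 //.
apply: lee_sum => y _; have -> : 8 * t = t * 2 ^+ 3 by rewrite mulrC; congr (_ * _); lra.
by apply: mu_cball_expn => //; lra.
Qed.

Hypothesis mu_locfin : locally_finite d mu.

Lemma mu_cball_fin x r : 0 < r <= 2 -> mu (cball d x r) \is a fin_num.
Proof.
case/andP=> r0 r2; have [r1 [r10 fin_r1]] := mu_locfin x.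
have [n le_r] : exists n, r <= r1 * 2 ^+ n.
  exists (Num.Def.archi_bound (r / r1)).
  have := archi_boundP (divr_ge0 (ltW r0) (ltW r10)); set N := Num.Def.archi_bound _.
  have : (N%:R : R) <= 2 ^+ N by rewrite -natrX ler_nat ltnW // ltn_expl.
  rewrite -ler_pdivrMl // mulrC => le_N /ltW lt_N; exact: le_trans lt_N le_N.
have rn0 : 0 < r / 2 ^+ n by rewrite divr_gt0 ?exprn_gt0.
have := mu_cball_expn x (r / 2 ^+ n) n rn0; rewrite divfK ?expf_neq0 // => /(_ r2) le_mu.
rewrite ge0_fin_numE ?outer_measure_ge0 //; apply: le_lt_trans le_mu _.
rewrite lte_mul_pinfty ?lee_fin ?exprn_ge0 ?doubling_const_ge0 //.
apply: le_lt_trans fin_r1; apply/le_outer_measure/le_cball.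
by rewrite ler_pdivrMr ?exprn_gt0.
Qed.

End Doubling.

Lemma mu_cball_gt0 x r : msupport d mu = setT -> 0 < r -> (0 < mu (cball d x r))%E.
Proof.
move=> supp r0; have : msupport d mu x by rewrite supp.
move=> /(_ r r0)/lt_le_trans; apply.
by apply: le_outer_measure => z /ltW.
Qed.

Section Hausdorff.
Variable theta : R.
Local Notation Hc := (Hcontent d mu theta).
Local Notation Hd := (Hcodim d mu theta).
Local Open Scope ereal_scope.

Lemma Hcontent_ge0 dl E : 0 <= Hc dl E.
Proof.
apply/ereal_infP => _ [I [c [rd [_ [_ ->]]]]]; apply: esum_ge0 => i _.
by rewrite mule_ge0 ?outer_measure_ge0 // lee_fin powR_ge0.
Qed.

Lemma le_Hcontent dl E F : E `<=` F -> Hc dl E <= Hc dl F.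
Proof.
move=> EF; apply: ereal_inf_le_tmp => _ [I [c [rd [cov [rdI ->]]]]].
by exists I, c, rd; split => //; apply: subset_trans cov.
Qed.

Lemma le_Hcontent_radius (dl dl' : R) E : (dl <= dl')%R -> Hc dl' E <= Hc dl E.
Proof.
move=> le_dl; apply: ereal_inf_le_tmp => _ [I [c [rd [cov [rdI ->]]]]].
exists I, c, rd; split => //; split => // i /rdI /andP[-> /lt_le_trans]; exact.
Qed.

Lemma Hcontent_le_Hcodim (dl : R) E : (0 < dl)%R -> Hc dl E <= Hd E.
Proof. by move=> dl0; apply: ereal_sup_ubound; exists dl. Qed.

Lemma Hcodim_ge0 E : 0 <= Hd E.
Proof. exact: le_trans (Hcontent_ge0 1 E) (Hcontent_le_Hcodim _ E ltr01). Qed.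

Lemma le_Hcodim E F : E `<=` F -> Hd E <= Hd F.
Proof.
move=> EF; apply/ereal_supP => _ [dl dl0 <-].
exact: le_trans (le_Hcontent dl _ _ EF) (Hcontent_le_Hcodim _ F dl0).
Qed.

Lemma Hcontent_cvg E : Hc dl E @[dl --> 0%R^'+] --> Hd E.
Proof.
have -> : Hd E = ereal_sup ((Hc ^~ E) @` [set` `]0%R, +oo[]).
  by congr (ereal_sup (_ @` _)); apply/seteqP; split => x /=; rewrite in_itv /= andbT.
by apply: nonincreasing_at_right_cvge => // a b _ _ /le_Hcontent_radius.
Qed.

Lemma mu_le_Hcontent (dl : R) E : (0 <= theta)%R -> (0 < dl)%R ->
  (dl `^ (- theta))%:E * mu E <= Hc dl E.
Proof.
move=> theta0 dl0; apply/ereal_infP => _ [I [c [rd [cov [rdI ->]]]]].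
pose F i := if i \in I then cball d (c i) (rd i) else set0.
have mu_le : mu E <= \sum_(0 <= i <oo | i \in I) mu (cball d (c i) (rd i)).
  rewrite eseries_mkcond (@eq_eseriesr _ _ (mu \o F)); last first.
    by move=> i _; rewrite /F /=; case: (i \in I); rewrite ?outer_measure0.
  apply: le_trans (outer_measure_sigma_subadditive mu F).
  by apply: le_outer_measure => z /cov [i Ii Fiz]; exists i; rewrite // /F mem_set.
have pow_ge0 : 0 <= (dl `^ (- theta))%:E by rewrite lee_fin powR_ge0.
apply: le_trans (lee_wpmul2l pow_ge0 mu_le) _.
rewrite -nneseriesZl; last by move=> i _; exact: outer_measure_ge0.
rewrite nneseries_esum ?set_mem_set; last first.
  by move=> i _; rewrite mule_ge0 ?outer_measure_ge0 // lee_fin powR_ge0.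
apply: le_esum => i /rdI /andP[rd0 rd_dl]; rewrite muleC.
rewrite lee_wpmul2l ?outer_measure_ge0 // lee_fin !powRN lef_pV2 ?posrE ?powR_gt0 //.
by rewrite ge0_ler_powR // ?nnegrE ltW.
Qed.

Lemma Hcodim_fin_null E : (0 < theta)%R -> Hd E \is a fin_num -> mu E = 0.
Proof.
move=> theta0 Hd_fin.
have pow_cvg : (dl `^ theta)%:E @[dl --> 0%R^'+] --> 0.
  by apply: cvg_EFin; [exact: nearW | exact: powR_cvg0].
apply/eqP; rewrite eq_le outer_measure_ge0 andbT.
have := cvgeZr Hd_fin pow_cvg; rewrite mul0e; apply: cvge_ge.
near=> dl; have dl0 : (0 < dl)%R by near: dl; exact: nbhs_right_gt.
have le_Hd := le_trans (mu_le_Hcontent _ E (ltW theta0) dl0) (Hcontent_le_Hcodim _ E dl0).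
have pow0 : (0 < dl `^ theta)%R by rewrite powR_gt0.
rewrite -[mu E]mul1e -(mulfV (lt0r_neq0 pow0)) EFinM -muleA -powRN.
by rewrite lee_wpmul2l // lee_fin ltW.
Unshelve. all: by end_near. Qed.

Hypothesis d_metric : is_metric d.

Lemma Hcontent_setU_separated (dl : R) A B : (0 < dl)%R ->
    (forall a b, A a -> B b -> 2 * dl <= d a b)%R ->
  Hc dl A + Hc dl B <= Hc dl (A `|` B).
Proof.
move=> dl0 sep; apply/ereal_infP => _ [I [c [rd [cov [rdI ->]]]]].
set J := [set i | exists2 a, A a & d (c i) a <= rd i]%R.
rewrite (esumID J); last first.
  by move=> i _; rewrite mule_ge0 ?outer_measure_ge0 // lee_fin powR_ge0.
apply: leeD; apply: ereal_inf_lbound; [exists (I `&` J)|exists (I `&` ~` J)];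
  exists c, rd; (split; [|split => // i [/rdI]]) => // z.
- by move=> Az; have [i Ii iz] := cov z (or_introl Az); exists i => //; split => //; exists z.
- move=> Bz; have [i Ii iz] := cov z (or_intror Bz); exists i => //; split => // -[a Aa ia].
  have := sep a z Aa Bz; have := metric_triangle d_metric a (c i) z.
  rewrite (metric_sym d_metric a (c i)); have /andP[_ rd_dl] := rdI i Ii.
  move: iz; rewrite /cball /=; lra.
Qed.

Lemma Hcodim_setU_separated (e : R) A B : (0 < e)%R ->
    (forall a b, A a -> B b -> e <= d a b)%R ->
  Hd A + Hd B <= Hd (A `|` B).
Proof.
move=> e0 sep; have e20 : (0 < e / 2)%R by rewrite divr_gt0.
have Hc_ge0 C : \forall dl \near 0%R^'+, 0 <= Hc dl C.
  by apply: nearW => dl; exact: Hcontent_ge0.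
apply: cvge_le (cvgeD _ (Hcontent_cvg A) (Hcontent_cvg B)); last first.
  by rewrite ge0_adde_def // inE; apply: cvge_ge (Hc_ge0 _) (Hcontent_cvg _).
near=> dl.
have dl0 : (0 < dl)%R by near: dl; exact: nbhs_right_gt.
have dl_e : (dl <= e / 2)%R by near: dl; exact: nbhs_right_le.
apply: le_trans (Hcontent_le_Hcodim _ _ dl0).
apply: Hcontent_setU_separated => // a b Aa Bb.
by apply: le_trans (sep a b Aa Bb); lra.
Unshelve. all: by end_near. Qed.

Lemma Hcodim_sum_separated_cball (A : set X) (t : R) L : (0 < t)%R ->
    pairwise (fun y y' => 4 * t < d y y')%R L ->
  \sum_(y <- L) Hd (cball d y t `&` A) <=
    Hd (\big[setU/set0]_(y <- L) (cball d y t `&` A)).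
Proof.
move=> t0; elim: L => [|y L IH] /=; first by rewrite !big_nil Hcodim_ge0.
move=> /andP[/allP far_y sepL]; rewrite !big_cons.
apply: le_trans (leeD2l _ (IH sepL)) _.
apply: (@Hcodim_setU_separated (2 * t)%R); first by rewrite mulr_gt0.
move=> a b [ya _]; rewrite -bigcup_seq => -[y' y'L [y'b _]].
have := far_y y' y'L; have := metric_triangle d_metric y a y'.
have := metric_triangle d_metric a b y'; rewrite (metric_sym d_metric b y').
by move: ya y'b; rewrite /cball /=; lra.
Qed.

End Hausdorff.

Lemma null_of_locally_null (S : set X) (e : R) : is_metric d -> mseparable d ->
  0 < e -> (forall s, S s -> mu (cball d s e `&` S) = 0%E) -> mu S = 0%E.
Proof.
move=> d_metric [D [/countable_injP[f f_inj] dense]] e0 loc_null.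
pose F n := S `&` [set z | exists2 y, D y /\ f y = n & d y z <= e / 2].
have F0 n : mu (F n) = 0%E.
  have [[z [Sz [y [Dy fy] yz]]]|noF] := pselect (exists z, F n z); last first.
    by rewrite (_ : F n = set0) ?outer_measure0 // -subset0 => z Fz; apply: noF; exists z.
  apply/eqP; rewrite eq_le outer_measure_ge0 andbT -(loc_null z Sz).
  apply: le_outer_measure => w [Sw [y' [Dy' fy'] y'w]]; split => //.
  have yy' : y = y' by apply: f_inj; rewrite ?inE // fy fy'.
  rewrite /cball /=; have := metric_triangle d_metric z y w.
  by rewrite (metric_sym d_metric z y) -yy' in y'w *; lra.
apply/eqP; rewrite eq_le outer_measure_ge0 andbT.
apply: (@le_trans _ _ (\sum_(0 <= n <oo) mu (F n))%E); last by rewrite eseries0.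
apply: le_trans (outer_measure_sigma_subadditive mu F).
have e20 : 0 < e / 2 by rewrite divr_gt0.
apply: le_outer_measure => s Ss; have [y [Dy sy]] := dense s (e / 2) e20.
by exists (f y) => //; split => //; exists y; rewrite // (metric_sym d_metric) ltW.
Qed.

Lemma ADR_null (Cd : R -> R) theta k1 k2 S : is_metric d ->
    doubling_bounded d mu Cd -> locally_finite d mu -> mseparable d ->
  0 < theta -> ADR d mu theta k1 k2 S -> mu S = 0%E.
Proof.
move=> d_metric mu_doubling mu_locfin d_sep theta0 [_ adr].
apply: null_of_locally_null d_metric d_sep ltr01 _ => s Ss.
apply: Hcodim_fin_null theta0 _.
have [_ upper] := adr s 1 Ss (introT andP (conj ltr01 (lexx 1))).
rewrite ge0_fin_numE ?Hcodim_ge0 //; apply: le_lt_trans upper _.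
rewrite ltey_eq !fin_numM //; apply: (mu_cball_fin mu_doubling mu_locfin).
by rewrite ltr01 ler1n.
Qed.

Section Porosity.
Context {Cd : R -> R} {theta k1 k2 : R} {S : set X}.
Hypotheses (d_metric : is_metric d) (mu_doubling : doubling_bounded d mu Cd)
  (mu_locfin : locally_finite d mu) (mu_supp : msupport d mu = setT)
  (k1_gt0 : 0 < k1) (S_ADR : ADR d mu theta k1 k2 S).
Local Notation K := (doubling_const Cd).
Local Notation mB y rho := (fine (mu (cball d y rho))).

Lemma mu_cball_EFin y rho : 0 < rho <= 2 -> (mB y rho)%:E = mu (cball d y rho).
Proof. by move=> rho02; rewrite fineK ?(mu_cball_fin mu_doubling mu_locfin). Qed.

Lemma mu_cball_fine_gt0 y rho : 0 < rho <= 2 -> 0 < mB y rho.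
Proof.
move=> /[dup] rho02 /andP[rho0 _].
by rewrite -lte_fin mu_cball_EFin // mu_cball_gt0.
Qed.

Lemma sum_mu_cball_EFin (L : seq X) t : 0 < t <= 2 ->
  (\sum_(y <- L) mu (cball d y t))%E = (\sum_(y <- L) mB y t)%:E.
Proof. by move=> t02; rewrite -sumEFin; apply: eq_bigr => y _; rewrite mu_cball_EFin. Qed.

Lemma ADR_packing x r t L : S x -> 0 < r <= 1 -> 0 < t <= 1 ->
    {in L, forall y, S y /\ d x y + t <= r} ->
    pairwise (fun y y' => 4 * t < d y y') L ->
  ((k1 * t `^ (- theta))%:E * \sum_(y <- L) mu (cball d y t) <=
    (k2 * r `^ (- theta))%:E * mu (cball d x r))%E.
Proof.
case: S_ADR => _ adr Sx r01 /[dup] t01 /andP[t0 _] LS Lsep.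
apply: (@le_trans _ _ (\sum_(y <- L) Hcodim d mu theta (cball d y t `&` S))%E).
  rewrite ge0_sume_distrr ?lee_fin ?mulr_ge0 ?powR_ge0 ?(ltW k1_gt0) // !big_seq.
  apply: lee_sum => y yL; have [lower _] := adr y t (proj1 (LS y yL)) t01.
  by rewrite EFinM muleAC.
apply: le_trans (Hcodim_sum_separated_cball theta d_metric S _ _ t0 Lsep) _.
have [_ upper] := adr x r Sx r01; rewrite EFinM muleAC; apply: le_trans upper.
apply: le_Hcodim; rewrite -bigcup_seq => z [y yL [yz Sz]]; split => //.
exact: subset_cball d_metric _ _ _ _ (proj2 (LS y yL)) _ yz.
Qed.

Section Ball.
Context {x : X} {r t : R} {m : nat}.
Hypotheses (Sx : S x) (r01 : 0 < r <= 1) (m2 : (2 <= m)%N) (rE : r = t * 2 ^+ m).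

Let t_gt0 : 0 < t.
Proof. by move: r01; rewrite rE pmulr_lgt0 ?exprn_gt0 // => /andP[]. Qed.

Let t4_le_r : 4 * t <= r.
Proof.
rewrite rE mulrC ler_pM2l ?t_gt0 //.
by rewrite [4](_ : _ = 2 ^+ 2) ?ler_eXn2l // ?ltr1n // expr2; lra.
Qed.

Let t01 : 0 < t <= 1.
Proof. by have := t4_le_r; case/andP: r01; rewrite t_gt0 /=; lra. Qed.

Let t02 : 0 < t <= 2.
Proof. by case/andP: t01 => -> /=; lra. Qed.

Let r02 : 0 < r <= 2.
Proof. by case/andP: r01 => -> /=; lra. Qed.

(* Each point of the family carries mass >= mu(B_r(x)) / K^(m+1), so the
   packing inequality bounds its size. *)
Lemma ADR_separated_size_bounded : exists N, forall L,
    {in L, forall y, S y /\ d x y <= r / 2 + t} ->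
    pairwise (fun y y' => 4 * t < d y y') L -> (size L <= N)%N.
Proof.
have t4r := t4_le_r; have [r0 r1] := andP r01.
have Km_gt0 : 0 < K ^+ m.+1 by rewrite exprn_gt0 ?doubling_const_gt0.
pose c := mB x r / K ^+ m.+1.
have c_gt0 : 0 < c by rewrite divr_gt0 ?mu_cball_fine_gt0.
have c_le y : d x y <= r -> c <= mB y t.
  move=> xy; rewrite ler_pdivrMr // mulrC -lee_fin EFinM !mu_cball_EFin //.
  apply: mu_cball_le_expn => //; rewrite exprS mulrCA -rE ?(metric_sym d_metric y); lra.
pose B := k2 * r `^ (- theta) * mB x r / (k1 * t `^ (- theta) * c).
exists (Num.Def.archi_bound B) => L LS Lsep; rewrite -ltnS -(ltr_nat R).
have LS' : {in L, forall y, S y /\ d x y + t <= r}.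
  by move=> y /LS[Sy xy]; split => //; lra.
have := ADR_packing x r t L Sx r01 t01 LS' Lsep.
rewrite sum_mu_cball_EFin // -(mu_cball_EFin x) // -!EFinM lee_fin => packing.
have size_le : (size L)%:R * c <= \sum_(y <- L) mB y t.
  rewrite mulr_natl -[c *+ _]iter_addr_0 -count_predT -big_const_seq !big_seq.
  by apply: ler_sum => y /LS[_ xy]; apply: c_le; lra.
have kt0 : 0 < k1 * t `^ (- theta) by rewrite mulr_gt0 ?powR_gt0 ?t_gt0.
have le_B : (size L)%:R <= B.
  rewrite ler_pdivlMr ?(mulr_gt0 kt0 c_gt0) // mulrCA.
  by apply: le_trans packing; rewrite ler_pM2l.
have B_ge0 := le_trans (ler0n R (size L)) le_B.
by apply: le_lt_trans le_B (lt_le_trans (archi_boundP B_ge0) _); rewrite ler_nat.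
Qed.

Lemma nonporous_cover : ~ porous_ball d S (2 ^+ m)^-1 x r ->
  exists L, [/\ {in L, forall y, S y /\ d x y + t <= r},
    pairwise (fun y y' => 4 * t < d y y') L &
    cball d x (r / 2) `<=` \big[setU/set0]_(y <- L) cball d y (8 * t)].
Proof.
move=> nonporous; have t4r := t4_le_r; have t0 := t_gt0.
have near_S z : d x z <= r / 2 -> exists2 s, S s & d z s <= t.
  move=> xz; apply: contrapT => far; apply: nonporous; exists z, t.
  split=> [|w zw]; first by rewrite rE mulrC mulfK ?expf_neq0.
  split=> [|Sw]; last by apply: far; exists w.
  by apply: subset_cball d_metric _ _ _ _ _ _ zw; lra.
have [N size_le] := ADR_separated_size_bounded.
have [L [LS Lsep Lmax]] := exists_maximal_pairwise _ _ _ _ size_le.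
exists L; split => //; first by move=> y /LS[Sy xy]; split => //; lra.
move=> z xz; have [s Ss zs] := near_S z xz; move: xz; rewrite /cball /= => xz.
have [|y yL] := Lmax s; first by split => //; have := metric_triangle d_metric x z s; lra.
rewrite -bigcup_seq -leNgt => ys; exists y => //; rewrite /cball /=.
have := metric_triangle d_metric y s z.
by rewrite (metric_sym d_metric y s) (metric_sym d_metric s z); lra.
Qed.

Lemma ADR_porous_ball : k2 * K ^+ 4 < k1 * (2 ^+ m) `^ theta ->
  porous_ball d S (2 ^+ m)^-1 x r.
Proof.
move=> Km_lt; apply: contrapT => /nonporous_cover[L [LS Lsep cover]].
have t0 := t_gt0; have [r0 r1] := andP r01.
have t8 : 8 * t <= 2 by have := t4_le_r; lra.
have := mu_cball_le_cover mu_doubling x r t L r01 t0 t8 cover.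
have := ADR_packing x r t L Sx r01 t01 LS Lsep.
rewrite sum_mu_cball_EFin // -(mu_cball_EFin x r) // -!EFinM !lee_fin.
set sum_t := \sum_(y <- L) _; set rho := r `^ (- theta); set Q := (2 ^+ m) `^ theta.
move=> packing covering.
have mu_x_gt0 := mu_cball_fine_gt0 x r r02.
have sum_gt0 : 0 < sum_t.
  have := lt_le_trans mu_x_gt0 covering.
  by rewrite pmulr_rgt0 // exprn_gt0 ?doubling_const_gt0.
have rho_gt0 : 0 < rho by rewrite powR_gt0.
have tE : t `^ (- theta) = Q * rho.
  rewrite /rho rE powRM ?exprn_ge0 ?ltW // [(2 ^+ m) `^ _]powRN mulrCA.
  by rewrite mulfV ?mulr1 // gt_eqF // powR_gt0 ?exprn_gt0.
have k2_gt0 : 0 < k2.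
  have : 0 < k2 * (rho * mB x r).
    by rewrite mulrA; apply: lt_le_trans packing; rewrite !mulr_gt0 ?powR_gt0.
  by rewrite pmulr_lgt0 ?mulr_gt0.
have : k1 * Q * (rho * sum_t) <= k2 * K ^+ 4 * (rho * sum_t).
  have -> : k1 * Q * (rho * sum_t) = k1 * t `^ (- theta) * sum_t by rewrite tE; ring.
  apply: le_trans packing _; rewrite -mulrA [_ * (rho * _)]mulrCA -mulrA ler_pM2l //.
  by rewrite ler_pM2l.
by rewrite ler_pM2r ?mulr_gt0 // leNgt Km_lt.
Qed.

End Ball.

End Porosity.

End MetricMeasure.

Lemma exists_expn_powR_gt {R : realType} (a b theta : R) : 0 < theta -> 0 < b ->
  exists m, (2 <= m)%N /\ a < b * (2 ^+ m) `^ theta.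
Proof.
move=> theta0 b0; pose M := Num.max (a / b) 1.
pose N := Num.Def.archi_bound (M `^ theta^-1).
have M_gt0 : 0 < M by rewrite lt_max ltr01 orbT.
exists N.+2; split => //.
have N_lt : M `^ theta^-1 < 2 ^+ N.+2.
  apply: lt_le_trans (archi_boundP (powR_ge0 _ _)) _.
  rewrite -natrX ler_nat.
  exact: leq_trans (leqnSn _) (leq_trans (leqnSn _) (ltnW (ltn_expl _ (ltnSn 1)))).
have M_nneg : M `^ theta^-1 \in Num.nneg by rewrite nnegrE powR_ge0.
have two_nneg : (2 ^+ N.+2 : R) \in Num.nneg by rewrite nnegrE exprn_ge0.
move: N_lt => /(gt0_ltr_powR theta0 M_nneg two_nneg).
rewrite -powRrM mulVf ?gt_eqF // powRr1 ?ltW // -ltr_pdivrMl //.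
by apply: le_lt_trans; rewrite mulrC le_max lexx.
Qed.

Theorem proposition1p9 (R : realType) (theta k1 k2 : R) (Cd : R -> R) :
  0 < theta -> 0 < k1 ->
  exists sigma : R, 0 < sigma <= 1 /\
  forall (X : pointedType) (d : X -> X -> R)
         (mu : {outer_measure set X -> \bar R}) (p : R) (S : set X),
    is_metric d -> mcomplete d -> mseparable d ->
    borel_regular d mu -> locally_finite d mu -> msupport d mu = setT ->
    doubling_bounded d mu Cd ->
    1 < p -> poincare d mu p ->
    ADR d mu theta k1 k2 S ->
    mu S = 0%E /\ porous d S sigma.
Proof.
move=> theta0 k1_gt0.
have [m [m2 Km_lt]] := exists_expn_powR_gt (k2 * doubling_const Cd ^+ 4) _ _ theta0 k1_gt0.
exists (2 ^+ m)^-1; split.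
  by rewrite invr_gt0 exprn_gt0 // invf_le1 ?exprn_gt0 // exprn_ege1 // ler1n.
move=> X d mu p S d_metric _ d_sep _ mu_locfin mu_supp mu_doubling _ _ S_ADR.
split; first exact: ADR_null d_metric mu_doubling mu_locfin d_sep theta0 S_ADR.
move=> x r Sx r01; have rE : r = r / 2 ^+ m * 2 ^+ m by rewrite divfK ?expf_neq0.
exact: (ADR_porous_ball _ _ d_metric mu_doubling mu_locfin mu_supp k1_gt0 S_ADR
  Sx r01 m2 rE Km_lt).
Qed.
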